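(* Let $(X,d)$ be a compact metric space and $F:X\to 2^X$ an onto, continuous set-valued map. If $F$ has the shadowing property, then $F^{-1}$ also has the shadowing property.
   Context: $2^X$ is the family of nonempty compact subsets of $X$ with Hausdorff metric $d_H$. A set-valued map $F$ is upper semicontinuous if for every $x$ and open $U\supset F(x)$ there is a neighborhood $V$ of $x$ with $F(y)\subset U$ for $y\in V$; lower semicontinuous if for every $x$ and open $U$ with $F(x)\cap U\ne\emptyset$ there is a neighborhood $V$ of $x$ with $F(y)\cap U\neq\emptyset$ for $y\in V$; continuous if both. $F$ is onto if every $y\in X$ lies in $F(x)$ for some $x$; then $F^{-1}(y)=\{x: y\in F(x)\}$ defines a set-valued map $F^{-1}:X\to 2^X$. For a set-valued map $G$, a $\delta$-pseudo-orbit is a sequence $\{x_n\}_{n\ge0}$ with $d(x_{n+1},G(x_n))<\delta$ for all $n$; a $G$-orbit is a sequence $(y_n)$ with $y_{n+1}\in G(y_n)$ for all $n$; $G$ has the shadowing property if for every $\varepsilon>0$ there is $\delta>0$ such that every $\delta$-pseudo-orbit $\{x_n\}$ admits a $G$-orbit $(y_n)$ with $d(x_n,y_n)<\varepsilon$ for all $n$. *)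

From Stdlib Require Import Reals List.
Open Scope R_scope.

Record is_metric (X : Type) (d : X -> X -> R) : Prop := {
  metric_nonneg : forall x y, 0 <= d x y;
  metric_eq0 : forall x y, d x y = 0 <-> x = y;
  metric_sym : forall x y, d x y = d y x;
  metric_triangle : forall x y z, d x z <= d x y + d y z
}.

Definition open_set {X : Type} (d : X -> X -> R) (U : X -> Prop) : Prop :=
  forall x, U x -> exists r, 0 < r /\ forall y, d x y < r -> U y.

Definition compact_set {X : Type} (d : X -> X -> R) (K : X -> Prop) : Prop :=
  forall (I : Type) (U : I -> X -> Prop),
    (forall i, open_set d (U i)) ->
    (forall x, K x -> exists i, U i x) ->
    exists l : list I, forall x, K x -> exists i, In i l /\ U i x.

Definition compact_space {X : Type} (d : X -> X -> R) : Prop :=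
  compact_set d (fun _ => True).

(* A set-valued map G : X -> 2^X is represented by G : X -> (X -> Prop),
   with "G x y" meaning y ∈ G(x). *)

Definition values_in_2X {X : Type} (d : X -> X -> R) (G : X -> X -> Prop) : Prop :=
  forall x, (exists y, G x y) /\ compact_set d (G x).

(* A neighborhood V of x is a set containing a ball around x; we quantify
   directly over balls. *)
Definition usc {X : Type} (d : X -> X -> R) (G : X -> X -> Prop) : Prop :=
  forall x (U : X -> Prop), open_set d U -> (forall y, G x y -> U y) ->
    exists r, 0 < r /\ forall x', d x x' < r -> forall y, G x' y -> U y.

Definition lsc {X : Type} (d : X -> X -> R) (G : X -> X -> Prop) : Prop :=
  forall x (U : X -> Prop), open_set d U -> (exists y, G x y /\ U y) ->
    exists r, 0 < r /\ forall x', d x x' < r -> exists y, G x' y /\ U y.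

Definition continuous_sv {X : Type} (d : X -> X -> R) (G : X -> X -> Prop) : Prop :=
  usc d G /\ lsc d G.

Definition onto_sv {X : Type} (G : X -> X -> Prop) : Prop :=
  forall y, exists x, G x y.

Definition inverse_sv {X : Type} (G : X -> X -> Prop) : X -> X -> Prop :=
  fun y x => G x y.

(* d(x, A) < delta, where d(x,A) = inf_{a in A} d(x,a): for nonempty A this
   is exactly "some a in A has d(x,a) < delta". *)
Definition dist_set_lt {X : Type} (d : X -> X -> R) (x : X) (A : X -> Prop)
  (delta : R) : Prop :=
  exists a, A a /\ d x a < delta.

Definition pseudo_orbit {X : Type} (d : X -> X -> R) (G : X -> X -> Prop)
  (delta : R) (xs : nat -> X) : Prop :=
  forall n, dist_set_lt d (xs (S n)) (G (xs n)) delta.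

Definition orbit {X : Type} (G : X -> X -> Prop) (ys : nat -> X) : Prop :=
  forall n, G (ys n) (ys (S n)).

Definition shadowing {X : Type} (d : X -> X -> R) (G : X -> X -> Prop) : Prop :=
  forall eps, 0 < eps -> exists delta, 0 < delta /\
    forall xs, pseudo_orbit d G delta xs ->
      exists ys, orbit G ys /\ forall n, d (xs n) (ys n) < eps.

(* Fix [eps], let [delta1] witness the shadowing of [F] for
   [eps/2], and let [delta] be a modulus of uniform lower semicontinuity of [F]
   for [delta1] (this is where compactness and continuity enter).  Reversing
   the first [N+1] points of a [delta]-pseudo-orbit of [F^{-1}] and continuing
   by any [F]-orbit gives a [delta1]-pseudo-orbit of [F]; reversing an [F]-orbit
   shadowing it yields a backward [F]-orbit segment of length [N] which stays
   [eps/2]-close to the pseudo-orbit.  A diagonal cluster-point argument, using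
   that the graph of the upper semicontinuous compact-valued map [F] is closed,
   turns these segments into a genuine [F^{-1}]-orbit [eps/2]-close to the
   pseudo-orbit. *)
From Stdlib Require Import Reals Lra Lia List ClassicalEpsilon.
Open Scope R_scope.

Lemma inv_succ_pos (k : nat) : 0 < / (INR k + 1).
Proof. apply Rinv_0_lt_compat. pose proof (pos_INR k); lra. Qed.

Lemma inv_succ_le (k K : nat) : (k <= K)%nat -> / (INR K + 1) <= / (INR k + 1).
Proof.
  intros HkK. apply Rinv_le_contravar; [pose proof (pos_INR k); lra|].
  apply Rplus_le_compat_r, le_INR, HkK.
Qed.

Lemma inv_succ_lt (r : R) : 0 < r -> exists N, / (INR N + 1) < r.
Proof.
  intros Hr. destruct (archimed_cor1 _ Hr) as [N [HN HN0]]. exists N.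
  eapply Rle_lt_trans; [|exact HN].
  apply Rinv_le_contravar; [apply lt_0_INR; lia | lra].
Qed.

Lemma list_bound {A : Type} (f : A -> nat) (l : list A) :
  exists M, forall t, In t l -> (f t <= M)%nat.
Proof.
  induction l as [|a l [M HM]]; [exists 0%nat; intros t []|].
  exists (Nat.max (f a) M). intros t [<-|Ht]; [lia | specialize (HM t Ht); lia].
Qed.

Definition frequently (P : nat -> Prop) : Prop :=
  forall M, exists k, (M <= k)%nat /\ P k.

Definition cluster_point {X : Type} (d : X -> X -> R) (s : nat -> X) (p : X) : Prop :=
  forall r, 0 < r -> frequently (fun k => d (s k) p < r).

Section Compactness.

Variables (X : Type) (d : X -> X -> R).
Hypothesis Hm : is_metric X d.

Lemma metric_refl (x : X) : d x x = 0.
Proof. exact (proj2 (metric_eq0 _ _ Hm x x) eq_refl). Qed.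

Lemma ball_open (q : X) (r : R) : open_set d (fun z => d q z < r).
Proof.
  intros x Hx. exists (r - d q x). split; [lra|]. intros y Hy.
  pose proof (metric_triangle _ _ Hm q x y). lra.
Qed.

Lemma ball_complement_open (b : X) (r : R) : open_set d (fun z => r < d b z).
Proof.
  intros x Hx. exists (d b x - r). split; [lra|]. intros y Hy.
  pose proof (metric_triangle _ _ Hm b y x). rewrite (metric_sym _ _ Hm y x) in *. lra.
Qed.

Lemma compact_dist_pos (K : X -> Prop) (b : X) :
  compact_set d K -> ~ K b -> exists rho, 0 < rho /\ forall z, K z -> rho < d b z.
Proof.
  intros HK Hb.
  destruct (HK nat (fun k z => / (INR k + 1) < d b z)) as [l Hl].
  - intro k. apply ball_complement_open.
  - intros z Hz.
    assert (Hbz : 0 < d b z).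
    { destruct (metric_nonneg _ _ Hm b z) as [H|H]; [exact H|].
      symmetry in H. apply (metric_eq0 _ _ Hm) in H. subst. contradiction. }
    destruct (inv_succ_lt _ Hbz) as [k Hk]. now exists k.
  - destruct (list_bound (fun k => k) l) as [N HN].
    exists (/ (INR N + 1)). split; [apply inv_succ_pos|].
    intros z Hz. destruct (Hl z Hz) as [k [Hk Hkz]].
    eapply Rle_lt_trans; [apply inv_succ_le, HN, Hk | exact Hkz].
Qed.

Hypothesis Hc : compact_space d.

(* Points that are not cluster points of [s] are covered by balls which [s]
   eventually avoids; a finite subcover contradicts any late term of [s]. *)
Lemma compact_cluster_point (s : nat -> X) : exists p, cluster_point d s p.
Proof.
  apply NNPP. intro Hno.
  destruct (Hc (X * R * nat)%type
    (fun t z => let '(x, r, N) := t in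
       (forall j, (N <= j)%nat -> r <= d (s j) x) /\ d x z < r)) as [l Hl].
  - intros [[x r] N] z [Hfar Hz].
    destruct (ball_open x r z Hz) as [rho [Hrho Hball]].
    exists rho. split; [exact Hrho|]. intros y Hy. split; [exact Hfar | now apply Hball].
  - intros x _.
    assert (Hfar : exists r N, 0 < r /\ forall j, (N <= j)%nat -> r <= d (s j) x).
    { apply NNPP. intro H. apply Hno. exists x. intros r Hr N. apply NNPP. intro Hk.
      apply H. exists r, N. split; [exact Hr|]. intros j Hj. apply Rnot_lt_le.
      intro Hjx. apply Hk. now exists j. }
    destruct Hfar as [r [N [Hr HN]]].
    exists (x, r, N). split; [exact HN | now rewrite metric_refl].
  - destruct (list_bound (fun t : (X * R * nat)%type => snd t) l) as [M HM].
    destruct (Hl (s M) Logic.I) as [[[x r] N] [Ht [Hfar Hx]]].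
    specialize (Hfar M (HM _ Ht)). rewrite (metric_sym _ _ Hm) in Hfar. lra.
Qed.

Lemma cluster_point_refine (P : R -> nat -> Prop) (t : nat -> X) :
  (forall r, 0 < r -> frequently (P r)) ->
  (forall r r' k, r <= r' -> P r k -> P r' k) ->
  exists q, forall r, 0 < r -> frequently (fun k => P r k /\ d (t k) q < r).
Proof.
  intros HP Hmono.
  destruct (choice (fun j k => (j <= k)%nat /\ P (/ (INR j + 1)) k)) as [kj Hkj].
  { intro j. apply HP, inv_succ_pos. }
  destruct (compact_cluster_point (fun j => t (kj j))) as [q Hq].
  exists q. intros r Hr M.
  destruct (inv_succ_lt r Hr) as [J HJ].
  destruct (Hq r Hr (M + J)%nat) as [j [Hj Hdj]].
  destruct (Hkj j) as [Hjk HPk].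
  exists (kj j). split; [lia|]. split; [|exact Hdj].
  apply (Hmono (/ (INR j + 1))); [|exact HPk].
  eapply Rle_trans; [apply inv_succ_le with (k := J); lia | lra].
Qed.

End Compactness.

Section SetValued.

Variables (X : Type) (d : X -> X -> R) (F : X -> X -> Prop).
Hypothesis Hm : is_metric X d.
Hypothesis HFc : forall x, compact_set d (F x).

Lemma usc_graph_closed (pa pb : X) :
  usc d F ->
  (forall r, 0 < r -> exists a b, F a b /\ d a pa < r /\ d b pb < r) -> F pa pb.
Proof.
  intros Hu Happrox. apply NNPP. intro Hn.
  destruct (compact_dist_pos _ _ Hm _ _ (HFc pa) Hn) as [rho [Hrho Hfar]].
  destruct (Hu pa _ (ball_complement_open _ _ Hm pb rho) Hfar) as [r [Hr Hr']].
  destruct (Happrox (Rmin r rho)) as [a [b [Hab [Ha Hb]]]]; [now apply Rmin_pos|].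
  rewrite (metric_sym _ _ Hm) in Ha, Hb.
  specialize (Hr' a ltac:(pose proof (Rmin_l r rho); lra) b Hab).
  pose proof (Rmin_r r rho). lra.
Qed.

(* Otherwise pick counterexamples [a_k, b_k, u_k] with [d a_k b_k -> 0]; a
   joint cluster point [(p, q)] of [(a_k, u_k)] lies in the closed graph of
   [F], and lower semicontinuity at [p] gives the contradiction. *)
Lemma uniform_lsc :
  compact_space d -> continuous_sv d F ->
  forall eta, 0 < eta -> exists delta, 0 < delta /\
    forall a b u, d a b < delta -> F a u -> exists v, F b v /\ d u v < eta.
Proof.
  intros Hc [Hu Hl] eta Heta. apply NNPP. intro Hno.
  destruct (choice (fun k (t : X * X * X) => let '(a, b, u) := t in
      d a b < / (INR k + 1) /\ F a u /\ forall v, F b v -> eta <= d u v)) as [t Ht].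
  { intro k. apply NNPP. intro H. apply Hno. exists (/ (INR k + 1)).
    split; [apply inv_succ_pos|]. intros a b u Hab Hau. apply NNPP. intro Hv.
    apply H. exists (a, b, u). split; [exact Hab|]. split; [exact Hau|].
    intros v Hbv. apply Rnot_lt_le. intro Huv. apply Hv. now exists v. }
  set (a k := fst (fst (t k))). set (b k := snd (fst (t k))). set (u k := snd (t k)).
  assert (Ht' : forall k, d (a k) (b k) < / (INR k + 1) /\ F (a k) (u k) /\
                  forall v, F (b k) v -> eta <= d (u k) v).
  { intro k. specialize (Ht k). unfold a, b, u. now destruct (t k) as [[? ?] ?]. }
  clear Ht.
  destruct (compact_cluster_point _ _ Hm Hc a) as [p Hp].
  destruct (cluster_point_refine _ _ Hm Hc (fun r k => d (a k) p < r) u Hp)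
    as [q Hpq]; [intros; lra|].
  assert (HFpq : F p q).
  { apply usc_graph_closed; [exact Hu|]. intros r Hr.
    destruct (Hpq r Hr 0%nat) as [k [_ [Hak Huk]]].
    exists (a k), (u k). split; [apply Ht' | split; assumption]. }
  destruct (Hl p _ (ball_open _ _ Hm q (eta / 2))) as [r [Hr Hr']].
  { exists q. split; [exact HFpq | rewrite metric_refl; [lra | exact Hm]]. }
  destruct (inv_succ_lt (r / 2)) as [M HM]; [lra|].
  destruct (Hpq (Rmin (r / 2) (eta / 2)) ltac:(apply Rmin_pos; lra) M)
    as [k [HMk [Hak Huk]]].
  pose proof (Rmin_l (r / 2) (eta / 2)). pose proof (Rmin_r (r / 2) (eta / 2)).
  destruct (Ht' k) as [Habk [_ Hfar]].
  pose proof (inv_succ_le _ _ HMk).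
  pose proof (metric_triangle _ _ Hm p (a k) (b k)).
  rewrite (metric_sym _ _ Hm p (a k)) in *.
  destruct (Hr' (b k) ltac:(lra)) as [v [Hbv Hqv]].
  specialize (Hfar v Hbv).
  pose proof (metric_triangle _ _ Hm (u k) q v). lra.
Qed.

End SetValued.

Section BackwardOrbitLimit.

Variables (X : Type) (d : X -> X -> R) (F : X -> X -> Prop).
Hypothesis Hm : is_metric X d.
Hypothesis Hc : compact_space d.
Variable W : nat -> nat -> X.

Definition prefix_cluster (n : nat) (f : nat -> X) : Prop :=
  forall r, 0 < r -> frequently (fun N => forall k, (k < n)%nat -> d (W N k) (f k) < r).

Definition extend (f : nat -> X) (n : nat) (y : X) : nat -> X :=
  fun k => if (k <? n)%nat then f k else y.

Lemma prefix_cluster_ext (n : nat) (f g : nat -> X) :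
  (forall k, (k < n)%nat -> f k = g k) -> prefix_cluster n f -> prefix_cluster n g.
Proof.
  intros Hfg Hf r Hr M. destruct (Hf r Hr M) as [N [HMN HN]].
  exists N. split; [exact HMN|]. intros k Hk. rewrite <- Hfg by exact Hk. now apply HN.
Qed.

Lemma prefix_cluster_extend (n : nat) (f : nat -> X) :
  prefix_cluster n f -> exists y, prefix_cluster (S n) (extend f n y).
Proof.
  intros Hf.
  destruct (cluster_point_refine _ _ Hm Hc
              (fun r N => forall k, (k < n)%nat -> d (W N k) (f k) < r)
              (fun N => W N n) Hf) as [y Hy].
  { intros r r' N Hrr' HN k Hk. specialize (HN k Hk). lra. }
  exists y. intros r Hr M. destruct (Hy r Hr M) as [N [HMN [HN Hn]]].
  exists N. split; [exact HMN|]. intros k Hk. unfold extend.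
  destruct (Nat.ltb_spec k n); [now apply HN|].
  now replace k with n by lia.
Qed.

Definition next_point (n : nat) (f : nat -> X) : X :=
  epsilon (inhabits (f 0%nat)) (fun y => prefix_cluster (S n) (extend f n y)).

Fixpoint approximant (n : nat) : nat -> X :=
  match n with
  | 0 => W 0%nat
  | S n => extend (approximant n) n (next_point n (approximant n))
  end.

Lemma approximant_cluster (n : nat) : prefix_cluster n (approximant n).
Proof.
  induction n as [|n IH]; simpl.
  - intros r _ M. exists M. split; [lia | intros k Hk; lia].
  - unfold next_point. apply epsilon_spec, prefix_cluster_extend, IH.
Qed.

Lemma approximant_stable (m k : nat) : (k < m)%nat -> approximant m k = approximant (S k) k.
Proof.
  induction m as [|m IH]; intros Hkm; [lia|].
  destruct (Nat.eq_dec k m) as [->|Hk]; [reflexivity|].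
  simpl. unfold extend at 1. destruct (Nat.ltb_spec k m); [apply IH|]; lia.
Qed.

Lemma prefix_cluster_seq : exists ys, forall n, prefix_cluster n ys.
Proof.
  exists (fun k => approximant (S k) k). intro n.
  apply (prefix_cluster_ext n (approximant n)); [apply approximant_stable|].
  apply approximant_cluster.
Qed.

Hypothesis HFc : forall x, compact_set d (F x).
Hypothesis Hu : usc d F.

Lemma backward_orbit_limit (xs : nat -> X) (e : R) :
  (forall N n, (n < N)%nat -> F (W N (S n)) (W N n)) ->
  (forall N n, (n <= N)%nat -> d (xs n) (W N n) <= e) ->
  exists ys, orbit (inverse_sv F) ys /\ forall n, d (xs n) (ys n) <= e.
Proof.
  intros HW Hclose. destruct prefix_cluster_seq as [ys Hys].
  exists ys. split.
  - intro n. apply (usc_graph_closed _ _ _ Hm HFc); [exact Hu|]. intros r Hr.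
    destruct (Hys (S (S n)) r Hr (S n)) as [N [HN Hd]].
    exists (W N (S n)), (W N n). split; [apply HW; lia|].
    split; apply Hd; lia.
  - intro n. apply Rnot_lt_le. intro Hfar.
    destruct (Hys (S n) (d (xs n) (ys n) - e) ltac:(lra) n) as [N [HN Hd]].
    specialize (Hd n ltac:(lia)). specialize (Hclose N n HN).
    pose proof (metric_triangle _ _ Hm (xs n) (W N n) (ys n)). lra.
Qed.

End BackwardOrbitLimit.

Section ReversedPseudoOrbit.

Variables (X : Type) (d : X -> X -> R) (F : X -> X -> Prop).
Hypothesis Hm : is_metric X d.

Definition reverse_prefix (xs : nat -> X) (c : X -> X) (N : nat) : nat -> X :=
  fun k => if (k <=? N)%nat then xs (N - k)%nat else Nat.iter (k - N) c (xs 0%nat).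

Lemma reverse_prefix_le (xs : nat -> X) (c : X -> X) (N k : nat) :
  (k <= N)%nat -> reverse_prefix xs c N k = xs (N - k)%nat.
Proof. intros Hk. unfold reverse_prefix. now destruct (Nat.leb_spec k N); [|lia]. Qed.

Lemma reverse_prefix_ge (xs : nat -> X) (c : X -> X) (N k : nat) :
  (N <= k)%nat -> reverse_prefix xs c N k = Nat.iter (k - N) c (xs 0%nat).
Proof.
  intros Hk. unfold reverse_prefix. destruct (Nat.leb_spec k N); [|reflexivity].
  replace k with N by lia. now rewrite Nat.sub_diag.
Qed.

Lemma pseudo_orbit_reverse_prefix (xs : nat -> X) (c : X -> X) (delta eta : R) (N : nat) :
  0 < eta -> (forall x, F x (c x)) ->
  (forall a b u, d a b < delta -> F a u -> exists v, F b v /\ d u v < eta) ->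
  pseudo_orbit d (inverse_sv F) delta xs -> pseudo_orbit d F eta (reverse_prefix xs c N).
Proof.
  intros Heta Hsel Hunif Hxs k.
  destruct (Nat.lt_ge_cases k N) as [Hk|Hk].
  - rewrite !reverse_prefix_le by lia.
    replace (N - k)%nat with (S (N - S k)) by lia.
    destruct (Hxs (N - S k)%nat) as [a [Ha Hda]].
    rewrite (metric_sym _ _ Hm) in Hda.
    destruct (Hunif _ _ _ Hda Ha) as [v [Hv Hdv]]. now exists v.
  - rewrite !reverse_prefix_ge by lia.
    replace (S k - N)%nat with (S (k - N)) by lia.
    exists (c (Nat.iter (k - N) c (xs 0%nat))).
    split; [apply Hsel | rewrite metric_refl; [lra | exact Hm]].
Qed.

End ReversedPseudoOrbit.

Arguments reverse_prefix {X}.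

(* Surjectivity of [F] only makes [F^{-1}] nonempty-valued; the shadowing
   property of [F^{-1}] as defined does not depend on it. *)
Theorem theorem4p7 (X : Type) (d : X -> X -> R) (F : X -> X -> Prop) :
  is_metric X d -> compact_space d ->
  values_in_2X d F -> onto_sv F -> continuous_sv d F ->
  shadowing d F -> shadowing d (inverse_sv F).
Proof.
  intros Hm Hc Hv _ HF Hsh eps Heps.
  assert (HFc : forall x, compact_set d (F x)) by (intro x; apply Hv).
  destruct (Hsh (eps / 2)) as [delta1 [Hdelta1 Hshadow]]; [lra|].
  destruct (uniform_lsc _ _ _ Hm HFc Hc HF delta1 Hdelta1) as [delta [Hdelta Hunif]].
  exists delta. split; [exact Hdelta|]. intros xs Hxs.
  destruct (choice F (fun x => proj1 (Hv x))) as [c Hsel].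
  destruct (choice (fun (N : nat) (w : nat -> X) => orbit F w /\
              forall n, d (reverse_prefix xs c N n) (w n) < eps / 2)) as [w Hw].
  { intro N. apply Hshadow. eapply pseudo_orbit_reverse_prefix; eassumption. }
  destruct (backward_orbit_limit _ _ F Hm Hc (fun N n => w N (N - n)%nat) HFc (proj1 HF)
              xs (eps / 2)) as [ys [Hys Hclose]].
  - intros N n Hn. replace (N - n)%nat with (S (N - S n)) by lia. apply Hw.
  - intros N n Hn. destruct (Hw N) as [_ HwN]. specialize (HwN (N - n)%nat).
    rewrite (reverse_prefix_le X), Nat.sub_sub_distr, Nat.sub_diag in HwN by lia. simpl in HwN. lra.
  - exists ys. split; [exact Hys|]. intro n. specialize (Hclose n). lra.
Qed.
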